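(* Let $m\geq 1$, let $\Lambda_m,\Delta_m\subseteq\mathbb{R}^{2^m}$ and $\Lambda_{m+1}\subseteq\mathbb{R}^{2^{m+1}}$ be the lattices defined below, and let $\iota,\tau:\mathbb{Z}^{2^m}\to\mathbb{Z}^{2^{m+1}}$ be the maps defined below. Then $\Lambda_{m+1}=\{\iota(\ell)+\iota(d)+\tau(\ell)\mid \ell\in\Lambda_m,\ d\in\Delta_m\}$.
   Context: For $n\ge 1$ let $\mathcal{V}_n=\mathbb{F}_2^n$ and let $(e_v\mid v\in\mathcal{V}_n)$ be an orthonormal basis of $\mathbb{R}^{2^n}$ indexed by $\mathcal{V}_n$; let $\Gamma_n=\langle e_v\mid v\in\mathcal{V}_n\rangle_{\mathbb{Z}}$. For $\mathcal{U}\subseteq\mathcal{V}_n$ put $x_{\mathcal{U}}=\sum_{v\in\mathcal{U}}e_v$. Define $\Lambda_n=\langle 2^{\lfloor (n-r)/2\rfloor}x_{\mathcal{U}} \mid 0\le r\le n,\ \mathcal{U}\text{ an affine subspace of }\mathcal{V}_n,\ \dim\mathcal{U}=r\rangle_{\mathbb{Z}}$ and $\Delta_n=\langle 2^{\lfloor (n-r+1)/2\rfloor}x_{\mathcal{U}} \mid 0\le r\le n,\ \mathcal{U}\text{ an affine subspace of }\mathcal{V}_n,\ \dim\mathcal{U}=r\rangle_{\mathbb{Z}}$. Fix a basis $(v_1,\dots,v_{m+1})$ of $\mathcal{V}_{m+1}$ and identify $\mathcal{V}_m$ with $\langle v_1,\dots,v_m\rangle$ via the embedding $\iota:\mathcal{V}_m\hookrightarrow\mathcal{V}_{m+1}$;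 let $\tau:\mathcal{V}_m\to\mathcal{V}_{m+1}$, $v\mapsto v_{m+1}+\iota(v)$, so $\mathcal{V}_{m+1}=\iota(\mathcal{V}_m)\,\dot\cup\,\tau(\mathcal{V}_m)$. Also denote by $\iota,\tau:\Gamma_m\to\Gamma_{m+1}$ the $\mathbb{Z}$-linear maps with $\iota(e_v)=e_{\iota(v)}$ and $\tau(e_v)=e_{\tau(v)}$ for $v\in\mathcal{V}_m$ (isometric embeddings with $\Gamma_{m+1}=\iota(\Gamma_m)\perp\tau(\Gamma_m)$). *)

From HB Require Import structures.
From mathcomp Require Import all_boot all_order all_algebra.
Set Implicit Arguments. Unset Strict Implicit. Unset Printing Implicit Defensive.
Import Order.TTheory GRing.Theory Num.Theory.
Local Open Scope ring_scope.

Definition V (n : nat) := 'rV['F_2]_n.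

Definition Gam (n : nat) := {ffun V n -> int}.

Definition is_affine (n : nat) (A : {set V n}) (r : nat) : bool :=
  [exists a : V n, exists M : 'M['F_2]_n,
     (\rank M == r) && (A == [set v : V n | (v - a <= M)%MS])].

Definition gen (n : nat) (A : {set V n}) (k : nat) : Gam n :=
  [ffun v => if v \in A then (2 ^ k)%:Z else 0].

Definition in_lattice (e : nat -> nat -> nat) (n : nat) (x : Gam n) : Prop :=
  exists c : {ffun {set V n} * 'I_n.+1 -> int},
    x = \sum_(p : {set V n} * 'I_n.+1 | is_affine p.1 p.2)
          gen p.1 (e n p.2) *~ c p.

Definition Lambda (n : nat) (x : Gam n) : Prop :=
  in_lattice (fun n r => (n - r)./2) x.
Definition Delta (n : nat) (x : Gam n) : Prop :=
  in_lattice (fun n r => (n - r).+1./2) x.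

(* embeddings V_m -> V_{m+1} for the basis given by the rows of B:
   iota(v) = sum_i v_i b_i,  tau(v) = b_{m+1} + iota(v) *)
Definition iotaV (m : nat) (B : 'M['F_2]_(m + 1)) (v : V m) : V (m + 1) :=
  row_mx v (0 : 'rV['F_2]_1) *m B.
Definition tauV (m : nat) (B : 'M['F_2]_(m + 1)) (v : V m) : V (m + 1) :=
  row_mx v (const_mx 1 : 'rV['F_2]_1) *m B.

(* induced Z-linear map Gamma_m -> Gamma_{m+1}, e_v |-> e_{f v} *)
Definition push (m : nat) (f : V m -> V (m + 1)) (x : Gam m) : Gam (m + 1) :=
  [ffun w => \sum_(v : V m | f v == w) x v].

(* Split a set W of V_(m+1) into the fibres U1 = iota^-1(W) and U2 = tau^-1(W).
   Over F_2 the affine subspaces of dimension r are exactly the sets of size 2^r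
   closed under x + y + z.  Hence for W affine either one fibre is empty and the
   other has dimension r, or the fibres are translates of dimension r - 1, so they
   are equal or disjoint with affine union pi(W) of dimension r (pi the projection
   along v_(m+1)).  In every case 2^k x_W = iota(l) + iota(d) + tau(l) with
   l = 2^k x_U2 in Lambda_m and d = 2^k (x_U1 - x_U2) in Delta_m, the disjoint case
   using 2^k (x_U1 - x_U2) = 2^k x_(U1 u U2) - 2^(k+1) x_U2.
   Conversely iota(x_U) + tau(x_U) = x_(pi^-1 U) with dim pi^-1(U) = dim U + 1,
   and iota(x_U) = x_(iota U), which matches the exponents of Delta_m. *)

From mathcomp Require Import all_boot all_order all_algebra zify.
Import GRing.Theory.
Local Open Scope ring_scope.
Set Implicit Arguments. Unset Strict Implicit. Unset Printing Implicit Defensive.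

Lemma F2_cases (c : 'F_2) : c = 0 \/ c = 1.
Proof. by case: c => [[|[|//]]] ?; [left | right]; apply: val_inj. Qed.

Lemma addvv n (v : V n) : v + v = 0.
Proof. by apply/rowP => i; rewrite !mxE addrr_pchar2 // pchar_Fp. Qed.

Lemma oppv n (v : V n) : - v = v.
Proof. by apply: (addrI v); rewrite addrN addvv. Qed.

Lemma addvK n (u v : V n) : u + v + v = u.
Proof. by rewrite -addrA addvv addr0. Qed.

Definition sum3_closed n (A : {set V n}) :=
  forall x y z, x \in A -> y \in A -> z \in A -> x + y + z \in A.

Definition sum3_morph m n (f : V m -> V n) :=
  forall x y z, f (x + y + z) = f x + f y + f z.

Lemma sum3_closed_imset m n (f : V m -> V n) (A : {set V m}) :
  sum3_morph f -> sum3_closed A -> sum3_closed (f @: A).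
Proof.
move=> fM hA _ _ _ /imsetP [x hx ->] /imsetP [y hy ->] /imsetP [z hz ->].
by rewrite -fM imset_f // hA.
Qed.

Lemma sum3_closed_preimset m n (f : V m -> V n) (A : {set V n}) :
  sum3_morph f -> sum3_closed A -> sum3_closed (f @^-1: A).
Proof. by move=> fM hA x y z; rewrite !inE fM; apply: hA. Qed.

Lemma card_V n : #|{: V n}| = (2 ^ n)%N.
Proof. by rewrite card_mx card_Fp // mul1n. Qed.

Lemma card_rowspace n (M : 'M['F_2]_n) :
  #|[set u : V n | (u <= M)%MS]| = (2 ^ \rank M)%N.
Proof.
have -> : [set u : V n | (u <= M)%MS] = [set D *m row_base M | D : V (\rank M)].
  apply/setP => u; rewrite inE; apply/idP/imsetP => [|[D _ ->]].
  - by rewrite -{1}(eq_row_base M) => /submxP [D ->]; exists D.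
  - by rewrite -(eq_row_base M) submxMl.
by rewrite card_imset ?card_V //; exact/row_free_inj/row_base_free.
Qed.

Lemma card_coset n (a : V n) (M : 'M['F_2]_n) :
  #|[set v : V n | (v - a <= M)%MS]| = (2 ^ \rank M)%N.
Proof.
rewrite -card_rowspace -(card_imset [set u : V n | (u <= M)%MS] (addIr a)).
apply: eq_card => v; rewrite inE; apply/idP/imsetP => [hv | [u]].
- by exists (v - a); rewrite ?inE ?subrK.
- by rewrite inE => hu ->; rewrite addrK.
Qed.

Lemma sub_row_F2 n (u v : V n) : (u <= v)%MS -> u = 0 \/ u = v.
Proof.
case/submxP => D ->; rewrite [D]mx11_scalar mul_scalar_mx.
have [->|->] := F2_cases (D 0 0).
- by left; rewrite scale0r.
- by right; rewrite scale1r.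
Qed.

Lemma addr_closed_rowspace n (S : {set V n}) :
  0 \in S -> {in S &, forall u w, u + w \in S} ->
  exists M : 'M['F_2]_n, S = [set u : V n | (u <= M)%MS].
Proof.
move=> S0 SD; exists (\sum_(v in S) <<v>>)%MS; apply/setP => u; rewrite inE.
apply/idP/idP => [hu | ]; first by apply: (sumsmx_sup u) => //; rewrite genmxE.
move: u; apply: (big_ind (fun N => forall u : V n, (u <= N)%MS -> u \in S)).
- by move=> u /submx0null ->.
- move=> N1 N2 IH1 IH2 u.
  by case/sub_addsmxP => -[D1 D2] /= ->; apply: SD; [apply: IH1 | apply: IH2];
    exact: submxMl.
- by move=> v hv u; rewrite genmxE => /sub_row_F2 [] ->.
Qed.

Lemma affineP n (A : {set V n}) r :
  is_affine A r <-> sum3_closed A /\ #|A| = (2 ^ r)%N.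
Proof.
split=> [|[hA cA]].
- case/existsP => a /existsP [M /andP [/eqP <- /eqP ->]]; split; last first.
    exact: card_coset.
  move=> x y z; rewrite !inE !oppv => hx hy hz.
  have -> : x + y + z + a = (x + a) + (y + a) + (z + a).
    by rewrite [x + a + _]addrACA addvv addr0 addrA.
  by apply/addmx_sub/hz; apply/addmx_sub/hy.
have [a ha] : exists a, a \in A by apply/set0Pn; rewrite -card_gt0 cA expn_gt0.
have [M hM] : exists M : 'M['F_2]_n,
    [set u : V n | u + a \in A] = [set u : V n | (u <= M)%MS].
  apply: addr_closed_rowspace => [|u w]; rewrite !inE ?add0r // => hu hw.
  by have := hA _ _ _ hu hw ha; rewrite [u + a + _]addrACA addvv addr0.
have eA : A = [set v : V n | (v - a <= M)%MS].
  apply/setP => v; have := congr1 (fun S : {set V n} => v - a \in S) hM.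
  by rewrite !inE subrK.
apply/existsP; exists a; apply/existsP; exists M; rewrite -eA eqxx andbT.
by rewrite -(@eqn_exp2l 2) // -(card_coset a) -eA cA.
Qed.

Lemma affine_dim_le n (A : {set V n}) r : is_affine A r -> (r <= n)%N.
Proof.
by case/affineP => _ cA; rewrite -(@leq_exp2l 2) // -cA -card_V max_card.
Qed.

Lemma gen_set0 n k : gen (set0 : {set V n}) k = 0.
Proof. by apply/ffunP => v; rewrite !ffunE inE. Qed.

Lemma genU n (A B : {set V n}) k :
  [disjoint A & B] -> gen (A :|: B) k = gen A k + gen B k.
Proof.
move=> dAB; apply/ffunP => v; rewrite !ffunE in_setU.
by case: (boolP (v \in A)) => [hA | _]; rewrite ?(disjointFr dAB hA) ?addr0 ?add0r.
Qed.

Lemma genS n (A : {set V n}) k : gen A k.+1 = gen A k + gen A k.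
Proof.
apply/ffunP => v; rewrite !ffunE.
by case: (v \in A); rewrite ?addr0 // expnS mul2n -addnn PoszD.
Qed.

Lemma gen_scale n (A : {set V n}) k j : gen A k *~ (2 ^ j)%N = gen A (k + j).
Proof.
apply/ffunP => v; rewrite ffunMzE !ffunE.
by case: (v \in A); rewrite ?mul0rz // mulrzz -PoszM expnD.
Qed.

Section Lattice.

Variables (e : nat -> nat -> nat) (n : nat).

Lemma in_lattice0 : in_lattice e (0 : Gam n).
Proof. by exists 0; rewrite big1 // => p _; rewrite ffunE mulr0z. Qed.

Lemma in_latticeD (x y : Gam n) :
  in_lattice e x -> in_lattice e y -> in_lattice e (x + y).
Proof.
move=> [c ->] [d ->]; exists (c + d); rewrite -big_split.
by apply: eq_bigr => p _; rewrite ffunE mulrzDr.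
Qed.

Lemma in_latticeN (x : Gam n) : in_lattice e x -> in_lattice e (- x).
Proof.
move=> [c ->]; exists (- c); rewrite -sumrN.
by apply: eq_bigr => p _; rewrite ffunE mulrNz.
Qed.

Lemma in_lattice_gen (A : {set V n}) r k :
  is_affine A r -> (e n r <= k)%N -> in_lattice e (gen A k).
Proof.
move=> hA hk; have hr : (r < n.+1)%N by rewrite ltnS (affine_dim_le hA).
pose p0 : {set V n} * 'I_n.+1 := (A, Ordinal hr).
exists [ffun p => if p == p0 then (2 ^ (k - e n r))%N%:Z else 0].
rewrite (bigD1 p0) //= big1 ?addr0 => [|p /andP [_ /negbTE p_p0]].
  by rewrite ffunE eqxx gen_scale subnKC.
by rewrite ffunE p_p0 mulr0z.
Qed.

Lemma in_lattice_ind (P : Gam n -> Prop) :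
  P 0 -> (forall x y, P x -> P y -> P (x + y)) -> (forall x, P x -> P (- x)) ->
  (forall A r, is_affine A r -> P (gen A (e n r))) ->
  forall x, in_lattice e x -> P x.
Proof.
move=> P0 PD PN Pgen x [c ->]; apply: big_ind => // p hp.
have Pnat (j : nat) : P (gen p.1 (e n p.2) *+ j).
  by elim: j => [|j IH]; rewrite ?mulr0n // mulrS; apply: PD => //; exact: Pgen.
by case: (c p) => j; rewrite ?NegzE ?mulrNz -pmulrn //; exact: PN.
Qed.

End Lattice.

Lemma push0 m (f : V m -> V (m + 1)) : push f 0 = 0.
Proof. by apply/ffunP => w; rewrite !ffunE big1 // => v _; rewrite ffunE. Qed.

Lemma pushD m (f : V m -> V (m + 1)) (x y : Gam m) :
  push f (x + y) = push f x + push f y.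
Proof.
by apply/ffunP => w; rewrite !ffunE -big_split; apply: eq_bigr => v _; rewrite ffunE.
Qed.

Lemma pushN m (f : V m -> V (m + 1)) (x : Gam m) : push f (- x) = - push f x.
Proof.
by apply/ffunP => w; rewrite !ffunE -sumrN; apply: eq_bigr => v _; rewrite ffunE.
Qed.

Lemma push_gen m (f : V m -> V (m + 1)) (U : {set V m}) k :
  injective f -> push f (gen U k) = gen (f @: U) k.
Proof.
move=> f_inj; apply/ffunP => w; rewrite !ffunE.
case: (pickP (fun v => f v == w)) => [v /eqP <- | none].
  by rewrite (big_pred1 v) => [|u]; rewrite ?ffunE ?mem_imset ?inj_eq.
rewrite big_pred0 //; case: imsetP => // -[v _ ew].
by move: (none v); rewrite ew eqxx.
Qed.

Lemma preimset_cancel (aT rT : finType) (f : aT -> rT) (g : rT -> aT) (U : {set aT}) :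
  cancel f g -> f @^-1: (g @^-1: U) = U.
Proof. by move=> fK; apply/setP => v; rewrite !inE fK. Qed.

Section Embedding.

Variables (m : nat) (B : 'M['F_2]_(m + 1)).
Hypothesis unitB : B \in unitmx.

Local Notation iota := (iotaV B).
Local Notation tau := (tauV B).

Definition projV (w : V (m + 1)) : V m := lsubmx (w *m invmx B).

Let t := tau 0.

Lemma iotaD (u v : V m) : iota (u + v) = iota u + iota v.
Proof. by rewrite /iotaV -mulmxDl add_row_mx addr0. Qed.

Lemma tauE (v : V m) : tau v = iota v + t.
Proof. by rewrite /t /tauV /iotaV -mulmxDl add_row_mx addr0 add0r. Qed.

Lemma iota_sum3 : sum3_morph iota.
Proof. by move=> x y z; rewrite !iotaD. Qed.

Lemma tau_sum3 : sum3_morph tau.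
Proof.
by move=> x y z; rewrite !tauE !iotaD [_ + t + _]addrACA addvv addr0 addrA.
Qed.

Lemma projV_sum3 : sum3_morph projV.
Proof. by move=> x y z; rewrite /projV !mulmxDl !linearD. Qed.

Lemma iotaK : cancel iota projV.
Proof. by move=> v; rewrite /projV /iotaV mulmxK // row_mxKl. Qed.

Lemma tauK : cancel tau projV.
Proof. by move=> v; rewrite /projV /tauV mulmxK // row_mxKl. Qed.

Lemma iota_neq_tau (u v : V m) : iota u != tau v.
Proof.
apply/eqP => /(congr1 (fun w => rsubmx (w *m invmx B))).
by rewrite /iotaV /tauV !mulmxK // !row_mxKr => /rowP /(_ 0); rewrite !mxE.
Qed.

Lemma iota_or_tau (w : V (m + 1)) : w = iota (projV w) \/ w = tau (projV w).
Proof.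
set u := w *m invmx B.
have -> : w = row_mx (lsubmx u) (rsubmx u) *m B by rewrite hsubmxK mulmxKV.
rewrite /iotaV /tauV /projV -/u !mulmxK // row_mxKl.
have [e|e] := F2_cases (rsubmx u 0 0); [left | right];
  by congr (row_mx _ _ *m B); apply/rowP => i; rewrite ord1 e !mxE.
Qed.

Lemma iota_inj : injective iota.
Proof. exact: can_inj iotaK. Qed.

Lemma tau_inj : injective tau.
Proof. exact: can_inj tauK. Qed.

Lemma iota_tau_disjoint (X Y : {set V m}) : [disjoint iota @: X & tau @: Y].
Proof.
rewrite -setI_eq0; apply/eqP/setP => w; rewrite inE in_set0.
apply/negbTE/andP => -[/imsetP [u _ ->] /imsetP [v _ /eqP]].
by rewrite (negbTE (iota_neq_tau u v)).
Qed.

Lemma fibres_partition (S : {set V (m + 1)}) :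
  S = iota @: (iota @^-1: S) :|: tau @: (tau @^-1: S).
Proof.
apply/setP => w; apply/idP/setUP => [hw | [] /imsetP [v + ->]]; rewrite ?inE //.
by case: (iota_or_tau w) => ew; [left | right]; rewrite ew imset_f // inE -ew.
Qed.

Lemma card_fibres (S : {set V (m + 1)}) :
  #|S| = (#|iota @^-1: S| + #|tau @^-1: S|)%N.
Proof.
rewrite {1}[S]fibres_partition cardsU (disjoint_setI0 (iota_tau_disjoint _ _)).
by rewrite cards0 subn0 (card_imset _ iota_inj) (card_imset _ tau_inj).
Qed.

Lemma gen_fibres (S : {set V (m + 1)}) k :
  gen S k = push iota (gen (iota @^-1: S) k) + push tau (gen (tau @^-1: S) k).
Proof.
rewrite {1}[S]fibres_partition (push_gen _ _ iota_inj) (push_gen _ _ tau_inj) -genU //.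
exact: iota_tau_disjoint.
Qed.

Lemma affine_iota_imset (U : {set V m}) r : is_affine U r -> is_affine (iota @: U) r.
Proof.
case/affineP => hU cU; apply/affineP; split; first exact: sum3_closed_imset iota_sum3 hU.
by rewrite card_imset //; exact: iota_inj.
Qed.

Lemma affine_projV_preimset (U : {set V m}) r :
  is_affine U r -> is_affine (projV @^-1: U) r.+1.
Proof.
case/affineP => hU cU; apply/affineP; split.
  exact: sum3_closed_preimset projV_sum3 hU.
rewrite card_fibres (preimset_cancel _ iotaK) (preimset_cancel _ tauK).
by rewrite cU expnS mul2n addnn.
Qed.

Lemma Lambda_iota_tau (l : Gam m) :
  Lambda l -> Lambda (push iota l + push tau l).
Proof.
move: l; apply: in_lattice_ind => [|x y|x|U r hU].
- by rewrite !push0 addr0; exact: in_lattice0.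
- by rewrite !pushD addrACA; exact: in_latticeD.
- by rewrite !pushN -opprD; exact: in_latticeN.
rewrite -{1}[U](preimset_cancel _ iotaK) -{2}[U](preimset_cancel _ tauK) -gen_fibres.
by apply: in_lattice_gen (affine_projV_preimset hU) _; lia.
Qed.

Lemma Lambda_iota (d : Gam m) : Delta d -> Lambda (push iota d).
Proof.
move: d; apply: in_lattice_ind => [|x y|x|U r hU].
- by rewrite push0; exact: in_lattice0.
- by rewrite pushD; exact: in_latticeD.
- by rewrite pushN; exact: in_latticeN.
rewrite (push_gen _ _ iota_inj).
by apply: in_lattice_gen (affine_iota_imset hU) _; have := affine_dim_le hU; lia.
Qed.

Section Fibres.

Variable W : {set V (m + 1)}.
Hypothesis closedW : sum3_closed W.

Local Notation U1 := (iota @^-1: W).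
Local Notation U2 := (tau @^-1: W).

Lemma fibre_shift a b v :
  iota a \in W -> tau b \in W -> (iota v \in W) = (tau (v + (a + b)) \in W).
Proof.
move=> ha hb; apply/idP/idP => hv; have := closedW hv ha hb.
  by rewrite !tauE !iotaD !addrA.
suff -> : tau (v + (a + b)) + iota a + tau b = iota v by [].
rewrite !tauE !iotaD !addrA (addrAC _ t (iota a)) (addrAC _ t (iota b)) addvK.
by rewrite (addrAC _ (iota b) (iota a)) !addvK.
Qed.

Lemma card_fibres_eq : U1 != set0 -> U2 != set0 -> #|U1| = #|U2|.
Proof.
move=> /set0Pn [a ha] /set0Pn [b hb]; rewrite !inE in ha hb.
have -> : U2 = (fun v => v + (a + b)) @^-1: U1.
  by apply/setP => v; rewrite !inE (fibre_shift _ ha hb) addvK.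
by rewrite card_preimset //; exact: addIr.
Qed.

Lemma fibres_eq c : c \in U1 -> c \in U2 -> U1 = U2.
Proof.
rewrite !inE => hc1 hc2; apply/setP => v.
by rewrite !inE (fibre_shift _ hc1 hc2) addvv addr0.
Qed.

End Fibres.

Lemma affine_fibres W r : is_affine W r ->
  [\/ iota @^-1: W = set0 /\ is_affine (tau @^-1: W) r,
      tau @^-1: W = set0 /\ is_affine (iota @^-1: W) r |
      exists2 s, r = s.+1 & is_affine (iota @^-1: W) s /\ is_affine (tau @^-1: W) s].
Proof.
case/affineP => hW cW; have cU := card_fibres W; rewrite cW in cU.
have hU1 := sum3_closed_preimset iota_sum3 hW.
have hU2 := sum3_closed_preimset tau_sum3 hW.
have [e1 | n1] := eqVneq (iota @^-1: W) set0.
  by apply: Or31; split => //; apply/affineP; rewrite cU e1 cards0.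
have [e2 | n2] := eqVneq (tau @^-1: W) set0.
  by apply: Or32; split => //; apply/affineP; rewrite cU e2 cards0 addn0.
apply: Or33; have e12 := card_fibres_eq hW n1 n2; rewrite -e12 in cU.
case: r cW cU => [|s] _ cU; first by lia.
have c1 : #|iota @^-1: W| = (2 ^ s)%N by move: cU; rewrite expnS; lia.
by exists s => //; split; apply/affineP; rewrite -?e12.
Qed.

Lemma affine_fibres_union W s :
  is_affine W s.+1 -> is_affine (iota @^-1: W) s -> is_affine (tau @^-1: W) s ->
  [disjoint iota @^-1: W & tau @^-1: W] ->
  is_affine (iota @^-1: W :|: tau @^-1: W) s.+1.
Proof.
move=> /affineP [hW _] /affineP [_ c1] /affineP [_ c2] dU; apply/affineP; split.
  have -> : iota @^-1: W :|: tau @^-1: W = projV @: W.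
    rewrite [in RHS](fibres_partition W) imsetU -!imset_comp.
    by rewrite (eq_imset _ iotaK) (eq_imset _ tauK) !imset_id.
  exact: sum3_closed_imset projV_sum3 hW.
by rewrite cardsU (disjoint_setI0 dU) cards0 subn0 c1 c2 expnS mul2n addnn.
Qed.

Lemma Lambda_tau_fibre W r :
  is_affine W r -> Lambda (gen (tau @^-1: W) ((m + 1 - r)./2)).
Proof.
case/affine_fibres => [[_ hU2] | [-> _] | [s -> [_ hU2]]].
- by apply: in_lattice_gen hU2 _; lia.
- by rewrite gen_set0; exact: in_lattice0.
- by apply: in_lattice_gen hU2 _; lia.
Qed.

Lemma Delta_fibres_sub W r : is_affine W r ->
  Delta (gen (iota @^-1: W) ((m + 1 - r)./2) - gen (tau @^-1: W) ((m + 1 - r)./2)).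
Proof.
move=> hWr; case: (affine_fibres hWr) => [[-> hU2] | [-> hU1] | [s er [hU1 hU2]]].
- rewrite gen_set0 sub0r; apply/in_latticeN/(in_lattice_gen hU2).
  by have := affine_dim_le hU2; lia.
- rewrite gen_set0 subr0; apply: (in_lattice_gen hU1).
  by have := affine_dim_le hU1; lia.
have [dU | ] := boolP [disjoint iota @^-1: W & tau @^-1: W]; last first.
  case/affineP: hWr => hW _; rewrite -setI_eq0 => /set0Pn [c /setIP [c1 c2]].
  by rewrite (fibres_eq hW c1 c2) subrr; exact: in_lattice0.
rewrite er in hWr *; have hY := affine_fibres_union hWr hU1 hU2 dU.
set k := _./2; have -> : gen (iota @^-1: W) k - gen (tau @^-1: W) k =
    gen (iota @^-1: W :|: tau @^-1: W) k - gen (tau @^-1: W) k.+1.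
  by rewrite genU // genS opprD addrA addrK.
apply: in_latticeD; last apply: in_latticeN.
- by apply: (in_lattice_gen hY); have := affine_dim_le hY; lia.
- by apply: in_lattice_gen hU2 _; lia.
Qed.

Definition glue (l d : Gam m) : Gam (m + 1) := push iota l + push iota d + push tau l.

Lemma glue0 : glue 0 0 = 0.
Proof. by rewrite /glue !push0 !addr0. Qed.

Lemma glueD l1 d1 l2 d2 : glue (l1 + l2) (d1 + d2) = glue l1 d1 + glue l2 d2.
Proof. by rewrite /glue !pushD [RHS]addrACA (addrACA (push iota l1)). Qed.

Lemma glueN l d : glue (- l) (- d) = - glue l d.
Proof. by rewrite /glue !pushN !opprD. Qed.

Lemma Lambda_glue l d : Lambda l -> Delta d -> Lambda (glue l d).
Proof.
move=> hl hd; rewrite /glue addrAC.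
exact: in_latticeD (Lambda_iota_tau hl) (Lambda_iota hd).
Qed.

Lemma gen_glue W r : is_affine W r ->
  exists l d, [/\ Lambda l, Delta d & gen W ((m + 1 - r)./2) = glue l d].
Proof.
move=> hW; set k := _./2.
exists (gen (tau @^-1: W) k), (gen (iota @^-1: W) k - gen (tau @^-1: W) k); split.
- exact: Lambda_tau_fibre hW.
- exact: Delta_fibres_sub hW.
by rewrite gen_fibres /glue pushD pushN addrCA subrr addr0 addrC.
Qed.

End Embedding.

Theorem theorem3p2 (m : nat) (hm : (1 <= m)%N)
  (B : 'M['F_2]_(m + 1)) (hB : B \in unitmx) (x : Gam (m + 1)) :
  Lambda x <->
  exists (l d : Gam m), [/\ Lambda l, Delta d &
    x = push (iotaV B) l + push (iotaV B) d + push (tauV B) l].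
Proof.
split=> [|[l [d [hl hd ->]]]]; last exact: Lambda_glue.
pose glued y := exists l d, [/\ Lambda l, Delta d & y = glue B l d].
move: x; apply: (@in_lattice_ind _ _ glued)
  => [|_ _ [l1 [d1 [hl1 hd1 ->]]] [l2 [d2 [hl2 hd2 ->]]] | _ [l [d [hl hd ->]]] | W r hW].
- by exists 0, 0; rewrite glue0; split=> //; exact: in_lattice0.
- by exists (l1 + l2), (d1 + d2); rewrite glueD; split=> //; exact: in_latticeD.
- by exists (- l), (- d); rewrite glueN; split=> //; exact: in_latticeN.
- exact: (gen_glue hB hW).
Qed.
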